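(* There is an isomorphism of multiplicative groups $\sigma:(\mathbb Q\setminus\{0\},\cdot)\to(\mathbb F_3(t)\setminus\{0\},\cdot)$, and letting $\lambda\in\mathbb Q$ act on $V=\mathbb Q\oplus\mathbb F_3(t)$ by $\lambda(v_1,v_2)=(\lambda v_1,\sigma(\lambda)v_2)$ (with $\sigma(0)=0$) makes $(V,\mathbb Q)$ a near vector space over the commutative $F=\mathbb Q$ whose two blocks $\mathbb Q\oplus0$ and $0\oplus\mathbb F_3(t)$ induce fields $(F,+_u,\circ)$ of different characteristics ($0$ and $3$).
   Context: A near vector space $(V,F)$: $(V,+)$ a group, $F$ a set of endomorphisms containing $0,1,-1$, with $F\setminus\{0\}$ a subgroup of $\mathrm{Aut}(V,+)$ acting fixed point freely ($\alpha x=\beta x\Rightarrow\alpha=\beta$ or $x=0$), such that the quasi-kernel $Q(V)=\{u:\forall\alpha,\beta\in F\,\exists\gamma\in F\ \alpha u+\beta u=\gamma u\}$ generates $V$. For $u\in Q(V)\setminus\{0\}$, $\alpha+_u\beta$ is the unique $\gamma\in F$ with $\alpha u+\beta u=\gamma u$; for commutative $F$, $(F,+_u,\circ)$ is a field. Blocks are the summands in André's decomposition of $V$ into maximal regular near vector subspaces, each nonzero quasi-kernel element lying in exactly one. *)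

From HB Require Import structures.
From mathcomp Require Import all_boot all_order all_algebra.
Set Implicit Arguments. Unset Strict Implicit. Unset Printing Implicit Defensive.
Import Order.TTheory GRing.Theory Num.Theory.
Local Open Scope ring_scope.

(* Generic near vector space notions.  V is the additive group; F is *)
(* a set (predicate) of maps V -> V; W is a subset of V (W = all of V *)
(* for the ambient space, or a candidate near vector subspace, on     *)
(* which F acts by restriction).                                      *)
Section NVS.
Variable V : zmodType.

Definition zero_map : V -> V := fun _ => 0.

Definition setTV : V -> Prop := fun _ => True.

Definition agree_on (W : V -> Prop) (f g : V -> V) : Prop :=
  forall x, W x -> f x = g x.

Definition quasi_kernel (F : (V -> V) -> Prop) (W : V -> Prop) (u : V) : Prop :=
  W u /\ (forall a b, F a -> F b -> exists2 c, F c & a u + b u = c u).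

Inductive gen (S : V -> Prop) : V -> Prop :=
| gen_in x : S x -> gen S x
| gen0 : gen S 0
| genD x y : gen S x -> gen S y -> gen S (x + y)
| genN x : gen S x -> gen S (- x).

Definition subgroup_of (W : V -> Prop) : Prop :=
  W 0 /\ (forall x y, W x -> W y -> W (x + y)) /\ (forall x, W x -> W (- x)).

Definition endos_of (F : (V -> V) -> Prop) (W : V -> Prop) : Prop :=
  forall f, F f -> (forall x y, f (x + y) = f x + f y) /\ (forall x, W x -> W (f x)).

Definition has_0_1_m1 (F : (V -> V) -> Prop) : Prop :=
  F zero_map /\ F id /\ F (fun x => - x).

Definition units_subgroup (F : (V -> V) -> Prop) (W : V -> Prop) : Prop :=
  (forall f g, F f -> F g -> exists2 h, F h & agree_on W h (f \o g))
  /\ (forall f, F f -> ~ agree_on W f zero_map ->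
        exists2 g, F g & ((forall x, W x -> g (f x) = x) /\ (forall x, W x -> f (g x) = x))).

Definition fixed_point_free (F : (V -> V) -> Prop) (W : V -> Prop) : Prop :=
  forall f g x, F f -> F g -> W x -> f x = g x -> agree_on W f g \/ x = 0.

Definition qk_generates (F : (V -> V) -> Prop) (W : V -> Prop) : Prop :=
  forall x, W x -> gen (quasi_kernel F W) x.

Definition near_vector_space (F : (V -> V) -> Prop) (W : V -> Prop) : Prop :=
  subgroup_of W /\ endos_of F W /\ has_0_1_m1 F /\ units_subgroup F W /\
  fixed_point_free F W /\ qk_generates F W.

(* u, v in Q(W)\{0} are compatible if u + l v in Q(W) for some nonzero l in F;
   W is regular if any two such elements are compatible (Andre). *)
Definition regular (F : (V -> V) -> Prop) (W : V -> Prop) : Prop :=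
  forall u v, quasi_kernel F W u -> quasi_kernel F W v -> u <> 0 -> v <> 0 ->
    exists2 l, F l & (~ agree_on W l zero_map /\ quasi_kernel F W (u + l v)).

Definition is_block (F : (V -> V) -> Prop) (W : V -> Prop) : Prop :=
  [/\ near_vector_space F W, regular F W &
      forall W', near_vector_space F W' -> regular F W' ->
        (forall x, W x -> W' x) -> forall x, W' x -> W x].

(* nmul_one F u n g : g is n * 1 computed in (F, +_u), i.e. iterating
   g_{n+1} = g_n +_u 1 where a +_u b is the c in F with a u + b u = c u. *)
Inductive nmul_one (F : (V -> V) -> Prop) (u : V) : nat -> (V -> V) -> Prop :=
| nm0 : nmul_one F u 0 zero_map
| nmS n g h : nmul_one F u n g -> F h -> g u + id u = h u -> nmul_one F u n.+1 h.

Definition field_char (F : (V -> V) -> Prop) (u : V) (p : nat) : Prop :=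
  (forall n g, (0 < n)%N -> (p == 0%N) || (n < p)%N -> nmul_one F u n g ->
     ~ agree_on setTV g zero_map)
  /\ ((0 < p)%N -> exists2 g, nmul_one F u p g & agree_on setTV g zero_map).

End NVS.

Definition F3t := {fraction {poly 'F_3}}.
Definition Vex := (rat * F3t)%type.

Definition act (sigma : rat -> F3t) (l : rat) (v : Vex) : Vex :=
  (l * v.1, sigma l * v.2).

Definition Fex (sigma : rat -> F3t) : (Vex -> Vex) -> Prop :=
  fun f => exists l : rat, f = act sigma l.

Definition block1 : Vex -> Prop := fun v => v.2 = 0.
Definition block2 : Vex -> Prop := fun v => v.1 = 0.

(* Q^x is {+-1} times the free abelian group on the primes, and F_3(t)^x is
   F_3^x = {+-1} times the free abelian group on the monic irreducible polynomials.
   Both families of generators are countably infinite, so a bijection Q from the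
   primes onto the monic irreducibles extends, by unique factorisation, to a
   multiplicative bijection sigma (+-a/b) = +-Q(a)/Q(b).
   A vector (a, b) with a, b <> 0 is then not in the quasi-kernel: u + u = k u forces
   k = 2 in Q but sigma k = 2 = -1 = sigma (-1) in F_3(t).  Hence the quasi-kernel is
   the union of the two axes, every regular near vector subspace lies in one axis,
   and the axes are the blocks.  On an axis the n-fold sum 1 +_u ... +_u 1 maps u to
   n u, computed in Q resp. F_3(t), which gives the characteristics 0 and 3. *)

From HB Require Import structures.
From mathcomp Require Import all_boot all_order all_algebra.
From mathcomp Require Import finmap boolp classical_sets cardinality.
From mathcomp Require Import zify ring lra.

Set Implicit Arguments.
Unset Strict Implicit.
Unset Printing Implicit Defensive.

Import GRing.Theory Num.Theory.
Local Open Scope ring_scope.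

Section NearVectorSpaceTheory.
Variables (V : zmodType) (F : (V -> V) -> Prop).

Lemma gen_ind (S B : V -> Prop) :
  subgroup_of B -> (forall x, S x -> B x) -> forall x, gen S x -> B x.
Proof. by move=> [B0 [BD BN]] SB x; elim=> //; auto. Qed.

Lemma near_vector_space_sub (W B : V -> Prop) :
  near_vector_space F W -> subgroup_of B ->
  (forall u, quasi_kernel F W u -> u <> 0 -> B u) -> forall x, W x -> B x.
Proof.
move=> [_ [_ [_ [_ [_ qkW]]]]] subB qkB x /qkW; apply: (gen_ind subB) => u qku.
by case: (eqVneq u 0) => [->|/eqP u0]; [case: subB | exact: qkB].
Qed.

Lemma nmul_one_eval u n g : nmul_one F u n g -> g u = u *+ n.
Proof. by elim=> [|m g' h _ IH _ <-]; rewrite ?mulr0n // IH mulrSr. Qed.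

Lemma nmul_one_exists W u n :
  has_0_1_m1 F -> quasi_kernel F W u -> exists2 g, F g & nmul_one F u n g.
Proof.
move=> [F0 [F1 _]] [_ qku]; elim: n => [|n [g Fg gn]].
  by exists (@zero_map V) => //; apply: nm0.
have [h Fh e] := qku g id Fg F1.
by exists h => //; apply: nmS gn Fh e.
Qed.

End NearVectorSpaceTheory.

Lemma eq_mulr_eq0 (R : idomainType) (a b x : R) : a != b -> a * x = b * x -> x = 0.
Proof.
move=> ab e; apply/eqP; move: (subrr (b * x)); rewrite -{1}e -mulrBl.
by move/eqP; rewrite mulf_eq0 subr_eq0 (negPf ab).
Qed.

Lemma mul_morph_inj (K L : fieldType) (f : K -> L) : {morph f : x y / x * y} ->
  (forall x, (f x == 0) = (x == 0)) -> (forall x, f x = 1 -> x = 1) -> injective f.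
Proof.
move=> fM f0 f1 x y fxy; have [y0|y0] := eqVneq y 0.
  by move: fxy; rewrite y0 => fx0; apply/eqP; rewrite -f0 fx0 f0.
have fy0 : f y != 0 by rewrite f0.
rewrite -(divfK y0 x) (f1 (x / y)) ?mul1r //.
by apply: (mulIf fy0); rewrite -fM divfK // fxy mul1r.
Qed.

Section MonicIrreducible.
Variable R : fieldType.
Implicit Types p q f : {poly R}.

Definition monic_irreducible p : Prop := p \is monic /\ irreducible_poly p.

Lemma monic_irreducible_coprime p q :
  monic_irreducible p -> monic_irreducible q -> p != q -> coprimep p q.
Proof.
move=> [mp ip] [mq iq] pq; rewrite (irreducible_poly_coprime _ ip).
apply: contra pq => /(apply_irredp iq); rewrite -eqp_monic //; apply.
by rewrite neq_ltn ip.1 orbT.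
Qed.

Lemma monic_irreducible_scale f : irreducible_poly f ->
  monic_irreducible ((lead_coef f)^-1 *: f).
Proof.
move=> [sf irrf]; have l0 : lead_coef f != 0 by rewrite lead_coef_eq0 -size_poly_gt0 ltnW.
split; first by rewrite monicE lead_coefZ mulVf.
split=> [|d sd]; first by rewrite size_scale ?invr_eq0.
rewrite dvdpZr ?invr_eq0 // => /(irrf _ sd) /eqp_trans; apply.
by rewrite eqp_sym eqp_scale ?invr_eq0.
Qed.

Lemma monic_irreducible_dvd f : (1 < size f)%N -> exists2 q, monic_irreducible q & q %| f.
Proof.
elim: {f}_.+1 {-2}f (ltnSn (size f)) => // n IHn f /ltnSE sfn sf.
have [irrf|] := pselect (irreducible_poly f).
  exists ((lead_coef f)^-1 *: f); first exact: monic_irreducible_scale.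
  by rewrite dvdpZl // invr_eq0 lead_coef_eq0 -size_poly_gt0 ltnW.
move=> /not_andP[/negP|/existsNP[d /not_implyP[sd /not_implyP[df /negP ndf]]]].
  by rewrite sf.
have f0 : f != 0 by rewrite -size_poly_gt0 ltnW.
have d0 : d != 0 by apply: contraTneq df => ->; rewrite dvd0p.
have sdf : (size d < size f)%N by rewrite ltn_neqAle dvdp_size_eqp // ndf dvdp_leq.
have [|q mq qd] := IHn d (leq_trans sdf sfn); first by rewrite ltn_neqAle eq_sym sd size_poly_gt0.
by exists q => //; apply: dvdp_trans qd df.
Qed.
Lemma infinite_monic_irreducible : infinite_set [set p | monic_irreducible p].
Proof.
move=> /finite_fsetP[X eX].
have Xin q : q \in X -> monic_irreducible q.
  by move=> qX; have : [set` X]%classic q by []; rewrite -eX.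
have inX q : monic_irreducible q -> q \in X.
  by move=> mq; have : [set` X]%classic q by rewrite -eX.
have mg : \prod_(q <- X) q \is monic by rewrite big_seq monic_prod // => q /Xin[].
have sf : (1 < size ('X * \prod_(q <- X) q + 1)%R)%N.
  by rewrite size_polyDl mulrC size_mulX ?monic_neq0 ?size_poly1 // ltnS size_poly_gt0 monic_neq0.
have [q mq /[dup] qf] := monic_irreducible_dvd sf.
rewrite dvdp_addr ?dvdp_mull ?(big_rem q (inX q mq)) ?dvdp_mulr // dvdp1 => /eqP sq1.
by move: mq => [_ [+ _]]; rewrite sq1.
Qed.

End MonicIrreducible.

Lemma infinite_primes : infinite_set [set p | prime p].
Proof.
move=> /finite_fsetP[X eX]; have [p ltp pp] := prime_above (\max_(x <- X) x).
have : [set` X]%classic p by rewrite -eX.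
by move=> /= pX; move: ltp; rewrite ltnNge (@leq_bigmax_seq _ _ xpredT id).
Qed.

Lemma prime_monic_irreducible_bij (R : countFieldType) : exists Q : nat -> {poly R},
  [/\ forall p, prime p -> monic_irreducible (Q p),
      {in prime &, injective Q}
    & forall q, monic_irreducible q -> exists2 p, prime p & Q p = q].
Proof.
set A := [set q : {poly R} | monic_irreducible q]%classic; set B := [set p | prime p]%classic.
have /card_set_bijP[f [fAB finj fsurj]] : (A #= B)%card.
  apply: Cantor_Bernstein; apply: card_le_trans (countableP _) _; apply/infiniteP.
    exact: infinite_primes.
  exact: infinite_monic_irreducible.
have /choice[Q hQ] p : exists q, prime p -> A q /\ f q = p.
  have [pp|] := boolP (prime p); last by exists 0.
  by have [q Aq fq] := fsurj p pp; exists q.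
exists Q; split=> [p /hQ[] //|p r pp pr eQ|q mq].
  by rewrite -(hQ p pp).2 -(hQ r pr).2 eQ.
have pq : prime (f q) by apply: fAB.
by exists (f q) => //; apply: finj; rewrite ?inE ?(hQ _ pq).2 //; exact: (hQ _ pq).1.
Qed.


Section PolyOfNat.
Variables (R : fieldType) (Q : nat -> {poly R}).
Hypotheses (Q_irr : forall p, prime p -> monic_irreducible (Q p))
  (Q_inj : {in prime &, injective Q})
  (Q_surj : forall q, monic_irreducible q -> exists2 p, prime p & Q p = q).

Definition poly_of_nat (n : nat) : {poly R} := \prod_(p < n.+1 | prime p) Q p ^+ logn p n.

Lemma poly_of_nat_widen n N : (n < N)%N ->
  poly_of_nat n = \prod_(p < N | prime p) Q p ^+ logn p n.
Proof.
move=> nN; rewrite /poly_of_nat (big_ord_widen_cond _ _ (fun p : nat => Q p ^+ logn p n) nN).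
rewrite [RHS]big_mkcond [LHS]big_mkcond; apply: eq_bigr => i _.
case: (prime i) => //=; case: ltnP => // ni; rewrite lognE.
by case: (posnP n) => [->|n0]; rewrite ?andbF // gtnNdvd // !andbF.
Qed.

Lemma poly_of_natM m n : (0 < m)%N -> (0 < n)%N ->
  poly_of_nat (m * n) = poly_of_nat m * poly_of_nat n.
Proof.
move=> m0 n0; set N := (m * n).+1.
rewrite !(@poly_of_nat_widen _ N) ?ltnS ?leq_pmulr ?leq_pmull // -big_split /=.
by apply: eq_bigr => i _; rewrite lognM // exprD.
Qed.

Lemma poly_of_nat1 : poly_of_nat 1 = 1.
Proof. by rewrite /poly_of_nat big1 // => i _; rewrite logn1. Qed.

Lemma poly_of_nat_prime p : prime p -> poly_of_nat p = Q p.
Proof.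
move=> pp; rewrite /poly_of_nat (bigD1 (Ordinal (ltnSn p))) //= logn_prime // eqxx.
rewrite big1 ?mulr1 // => i /andP[pi ip]; rewrite logn_prime //.
by case: eqP => // ei; move: ip; rewrite -val_eqE /= ei eqxx.
Qed.

Lemma poly_of_nat_monic n : poly_of_nat n \is monic.
Proof. by apply: monic_prod => p /Q_irr[mQ _]; apply: monic_exp. Qed.

Lemma coprimep_Q_poly_of_nat p n : prime p -> ~~ (p %| n)%N -> coprimep (Q p) (poly_of_nat n).
Proof.
move=> pp pn; apply: (big_ind (coprimep (Q p))) => [|x y|i pi]; first exact: coprimep1.
  by rewrite coprimepMr => ->.
have [->|ip] := eqVneq (i : nat) p.
  by rewrite lognE (negPf pn) !andbF expr0 coprimep1.
apply/coprimep_expr/monic_irreducible_coprime; try exact: Q_irr.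
by apply: contra ip => /eqP /Q_inj ->.
Qed.

Lemma dvdp_Q_poly_of_nat p n : prime p -> (0 < n)%N -> (p %| n)%N ->
  Q p %| poly_of_nat n.
Proof.
move=> pp n0 pn; have pn1 : (p < n.+1)%N by rewrite ltnS dvdn_leq.
rewrite /poly_of_nat (bigD1 (Ordinal pn1)) //= dvdp_mulr //.
have : (0 < logn p n)%N by rewrite logn_gt0 mem_primes pp n0 pn.
by case: (logn p n) => // k _; rewrite exprS dvdp_mulr.
Qed.

Lemma poly_of_nat_coprime_eq a b : coprime a b -> (0 < a)%N ->
  poly_of_nat a = poly_of_nat b -> a = 1%N.
Proof.
move=> cab a0 eab; apply/eqP; rewrite eqn_leq a0 andbT leqNgt; apply/negP => a1.
have pp := pdiv_prime a1; have pa := pdiv_dvd a.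
have pb : ~~ (pdiv a %| b)%N by rewrite -prime_coprime // (coprime_dvdl pa).
move: (coprimep_Q_poly_of_nat pp pb).
by rewrite -eab (irreducible_poly_coprime _ (Q_irr pp).2) dvdp_Q_poly_of_nat.
Qed.

Lemma monic_poly_of_nat f : f \is monic -> exists2 n, (0 < n)%N & f = poly_of_nat n.
Proof.
elim: {f}_.+1 {-2}f (ltnSn (size f)) => // k IHk f /ltnSE sfk mf.
case: (leqP (size f) 1) => [sf1|sf1].
  exists 1%N; rewrite // poly_of_nat1; move: (monicP mf).
  by rewrite [f]size1_polyC // lead_coefC => ->.
have [q mq /divpK fE] := monic_irreducible_dvd sf1.
have [p pp Qp] := Q_surj mq.
have mfq : f %/ q \is monic by rewrite -(monicMr _ mq.1) fE.
have sfq : (size (f %/ q)%R < k)%N.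
  rewrite size_divp ?monic_neq0 ?mq.1 //; apply: leq_trans sfk.
  by rewrite ltn_subrL (ltnW sf1) andbT -subn1 subn_gt0 mq.2.1.
have [m m0 fqE] := IHk _ sfq mfq.
exists (m * p)%N; first by rewrite muln_gt0 m0 prime_gt0.
by rewrite -fE fqE poly_of_natM ?(prime_gt0 pp) // (poly_of_nat_prime pp) Qp.
Qed.

Lemma poly_of_nat_lead f : f != 0 ->
  exists2 n, (0 < n)%N & f = lead_coef f *: poly_of_nat n.
Proof.
move=> f0; have l0 : lead_coef f != 0 by rewrite lead_coef_eq0.
have [|n n0 fE] := @monic_poly_of_nat ((lead_coef f)^-1 *: f).
  by rewrite monicE lead_coefZ mulVf.
by exists n; rewrite // -fE scalerA mulfV ?scale1r.
Qed.

End PolyOfNat.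

Local Notation "x %:F" := (@FracField.tofrac _ x).

Lemma fraction_tofrac_div (R : idomainType) (x : {fraction R}) :
  exists n d, d != 0 /\ x = n%:F / d%:F.
Proof.
elim/quotW: x => r; have d0 : r.2 != 0 := denom_ratioP r.
exists r.1, r.2; split=> //; apply: (mulIf (_ : r.2%:F != 0)); first by rewrite tofrac_eq0.
rewrite divfK ?tofrac_eq0 //; unlock FracField.tofrac; rewrite -[_ * _]FracField.pi_mul.
apply/eqmodP; rewrite /= FracField.equivfE /FracField.mulf.
by rewrite !numden_Ratio ?mulr1 ?mul1r ?oner_eq0 // mulrC.
Qed.

Lemma rat_sign_numden (x : rat) : x = (-1) ^+ (numq x < 0)%R * `|numq x|%:R / `|denq x|%:R.
Proof.
rewrite -{1}(divq_num_den x) {1}[numq x]intEsign rmorphM rmorph_sign /=.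
by rewrite pmulrn natr_absz gtr0_norm ?denq_gt0.
Qed.

Lemma rat_sign_frac (x : rat) : x != 0 -> exists (s : bool) a b,
  [/\ (0 < a)%N, (0 < b)%N, coprime a b & x = (-1) ^+ s * a%:R / b%:R].
Proof.
move=> x0; exists (numq x < 0)%R, `|numq x|%N, `|denq x|%N.
by rewrite !absz_gt0 numq_eq0 denq_eq0 x0 coprime_num_den -rat_sign_numden.
Qed.

Lemma sign_frac_eq (s t : bool) a b c d : (0 < a)%N -> (0 < b)%N -> (0 < c)%N -> (0 < d)%N ->
  (-1) ^+ s * a%:R / b%:R = (-1) ^+ t * c%:R / d%:R :> rat -> s = t /\ (a * d = c * b)%N.
Proof.
move=> a0 b0 c0 d0 /eqP; rewrite eqr_div ?pnatr_eq0 -?lt0n // -!mulrA -!natrM => /eqP.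
have ad0 : 0 < (a * d)%:R :> rat by rewrite ltr0n muln_gt0 a0.
have cb0 : 0 < (c * b)%:R :> rat by rewrite ltr0n muln_gt0 c0.
case: s; case: t; rewrite ?expr0 ?expr1 ?mul1r ?mulN1r.
- by move/oppr_inj/eqP; rewrite eqr_nat => /eqP.
- by move=> e; exfalso; lra.
- by move=> e; exfalso; lra.
- by move/eqP; rewrite eqr_nat => /eqP.
Qed.

Lemma F3_unit_sign (c : 'F_3) : c != 0 -> exists s : bool, c = (-1) ^+ s.
Proof. by case: c => -[|[|[|k]]] // hk _; [exists false|exists true]; apply/val_inj. Qed.

Lemma pchar_F3t : 3 \in [pchar F3t].
Proof. by apply: (rmorph_pchar (@FracField.tofrac _)); rewrite pchar_poly pchar_Fp. Qed.

Lemma natr_F3t_eq0 n : ((n%:R : F3t) == 0) = (3 %| n)%N.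
Proof. by rewrite (dvdn_pcharf pchar_F3t). Qed.

Lemma F3t_natr2 : 2%:R = -1 :> F3t.
Proof. by apply/eqP; rewrite -subr_eq0 opprK -(natrD _ 2 1) natr_F3t_eq0. Qed.

Section SigmaF3.
Variable Q : nat -> {poly 'F_3}.
Hypotheses (Q_irr : forall p, prime p -> monic_irreducible (Q p))
  (Q_inj : {in prime &, injective Q})
  (Q_surj : forall q, monic_irreducible q -> exists2 p, prime p & Q p = q).

Local Notation P := (poly_of_nat Q).

(* The branch [x == 0] is needed: [P 0] is the empty product [1]. *)
Definition sigma_F3 (x : rat) : F3t :=
  if x == 0 then 0
  else (-1) ^+ (numq x < 0)%R * (P `|numq x|)%:F / (P `|denq x|)%:F.

Lemma P_neq0 n : (P n)%:F != 0 :> F3t.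
Proof. by rewrite tofrac_eq0 monic_neq0 ?poly_of_nat_monic. Qed.

Lemma sigma_F3E (s : bool) a b : (0 < a)%N -> (0 < b)%N ->
  sigma_F3 ((-1) ^+ s * a%:R / b%:R) = (-1) ^+ s * (P a)%:F / (P b)%:F.
Proof.
move=> a0 b0; set x := _ * _ / _.
have x0 : x != 0 by rewrite !mulf_neq0 ?invr_eq0 ?signr_eq0 ?pnatr_eq0 -?lt0n.
have := rat_sign_numden x; rewrite {1}/x /sigma_F3 (negPf x0) => /esym/sign_frac_eq.
rewrite !absz_gt0 numq_eq0 denq_eq0 x0 => /(_ isT isT a0 b0)[-> nb].
rewrite -!mulrA; congr (_ * _); apply/eqP; rewrite eqr_div ?P_neq0 // -!tofracM.
by rewrite -!poly_of_natM ?absz_gt0 ?numq_eq0 ?denq_eq0 ?x0 // nb.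
Qed.

Lemma sigma_F3_0 : sigma_F3 0 = 0.
Proof. by rewrite /sigma_F3 eqxx. Qed.

Lemma sigma_F3_eq0 x : (sigma_F3 x == 0) = (x == 0).
Proof.
have [->|x0] := eqVneq x 0; first by rewrite sigma_F3_0 eqxx.
have [s [a [b [a0 b0 _ ->]]]] := rat_sign_frac x0.
by apply/negbTE; rewrite sigma_F3E // !mulf_neq0 ?signr_eq0 ?invr_eq0 ?P_neq0.
Qed.

Lemma sigma_F3M : {morph sigma_F3 : x y / x * y}.
Proof.
move=> x y; have [->|x0] := eqVneq x 0; first by rewrite mul0r sigma_F3_0 mul0r.
have [->|y0] := eqVneq y 0; first by rewrite mulr0 sigma_F3_0 mulr0.
have [s [a [b [a0 b0 _ ->]]]] := rat_sign_frac x0.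
have [t [c [d [c0 d0 _ ->]]]] := rat_sign_frac y0.
have -> : (-1) ^+ s * a%:R / b%:R * ((-1) ^+ t * c%:R / d%:R) =
    (-1) ^+ (s (+) t) * (a * c)%N%:R / (b * d)%N%:R :> rat.
  by rewrite signr_addb !natrM invfM; ring.
rewrite !sigma_F3E ?muln_gt0 ?a0 ?b0 ?c0 ?d0 // !poly_of_natM // !tofracM signr_addb invfM.
by ring.
Qed.

Lemma sigma_F3_eq1 x : sigma_F3 x = 1 -> x = 1.
Proof.
have [->|x0] := eqVneq x 0; first by rewrite sigma_F3_0 => /eqP; rewrite eq_sym oner_eq0.
have [s [a [b [a0 b0 cab ->]]]] := rat_sign_frac x0.
rewrite sigma_F3E // => /(canRL (divfK (P_neq0 b))); rewrite mul1r.
rewrite -(rmorph_sign (@FracField.tofrac _)) -tofracM => /eqP; rewrite tofrac_eq => /eqP.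
case: s => [/(congr1 lead_coef)|]; rewrite ?expr1 ?mulN1r ?expr0 ?mul1r.
  by rewrite lead_coefN !(monicP (poly_of_nat_monic _ _)).
move=> Pab; have a1 := poly_of_nat_coprime_eq Q_irr Q_inj cab a0 Pab.
rewrite coprime_sym in cab; have b1 := poly_of_nat_coprime_eq Q_irr Q_inj cab b0 (esym Pab).
by rewrite a1 b1 divr1.
Qed.

Lemma sigma_F3_inj : injective sigma_F3.
Proof. exact: mul_morph_inj sigma_F3M sigma_F3_eq0 sigma_F3_eq1. Qed.

Lemma sigma_F3_surj y : exists x, sigma_F3 x = y.
Proof.
have [->|y0] := eqVneq y 0; first by exists 0; rewrite sigma_F3_0.
have signed_P f : f != 0 -> exists (s : bool) a, (0 < a)%N /\ f%:F = (-1) ^+ s * (P a)%:F.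
  move=> f0; have [a a0 fE] := poly_of_nat_lead Q_surj f0.
  have [s ls] : exists s : bool, lead_coef f = (-1) ^+ s.
    by apply: F3_unit_sign; rewrite lead_coef_eq0.
  by exists s, a; rewrite fE ls -mul_polyC rmorph_sign tofracM rmorph_sign.
have [n [d [d0 yE]]] := fraction_tofrac_div y.
have n0 : n != 0 by apply: contraNneq y0 => n0; rewrite yE n0 tofrac0 mul0r.
have [s [a [a0 nE]]] := signed_P n n0; have [t [b [b0 dE]]] := signed_P d d0.
exists ((-1) ^+ (s (+) t) * a%:R / b%:R).
by rewrite sigma_F3E // yE nE dE signr_addb invfM invr_sign; ring.
Qed.

End SigmaF3.

Lemma VexD (x y : Vex) : x + y = (x.1 + y.1, x.2 + y.2). Proof. by []. Qed.
Lemma VexN (x : Vex) : - x = (- x.1, - x.2). Proof. by []. Qed.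

Section ExampleSpace.
Variable sigma : rat -> F3t.
Hypotheses (sigma0 : sigma 0 = 0) (sigmaM : {morph sigma : x y / x * y}).
Hypotheses (sigma_inj : injective sigma) (sigma_surj : forall y, exists x, sigma x = y).

Local Notation F := (Fex sigma).

Lemma sigma_eq0 x : (sigma x == 0) = (x == 0).
Proof. by rewrite -sigma0 (inj_eq sigma_inj). Qed.

Lemma sigma1 : sigma 1 = 1.
Proof. by have [x ex] := sigma_surj 1; rewrite -ex -[x]mul1r sigmaM ex mulr1. Qed.

Lemma sigmaN1 : sigma (-1) = -1.
Proof.
have /eqP : sigma (-1) ^+ 2 = 1 by rewrite expr2 -sigmaM mulrNN mulr1 sigma1.
rewrite sqrf_eq1 -{1}sigma1 (inj_eq sigma_inj) => /orP[//|/eqP //].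
Qed.

Lemma act_in l : F (act sigma l). Proof. by exists l. Qed.

Lemma act0 : act sigma 0 = @zero_map Vex.
Proof. by apply: funext => v; rewrite /act sigma0 !mul0r. Qed.

Lemma act1 : act sigma 1 = id.
Proof. by apply: funext => -[a b]; rewrite /act sigma1 !mul1r. Qed.

Lemma actN1 : act sigma (-1) = -%R.
Proof. by apply: funext => v; rewrite /act sigmaN1 !mulN1r. Qed.

Lemma actD l : {morph act sigma l : x y / x + y}.
Proof. by move=> x y; rewrite /act !mulrDr. Qed.

Lemma act_comp l m : act sigma l \o act sigma m = act sigma (l * m).
Proof. by apply: funext => v; rewrite /act /= sigmaM !mulrA. Qed.

Lemma has_0_1_m1_Fex : has_0_1_m1 F.
Proof.
by split; [|split]; [exists 0; rewrite act0 | exists 1; rewrite act1 | exists (-1); rewrite actN1].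
Qed.

Lemma units_subgroup_Fex W : units_subgroup F W.
Proof.
split=> [_ _ [l ->] [m ->]|_ [l ->] nz].
  by exists (act sigma (l * m)); [exact: act_in | move=> x _; rewrite -act_comp].
have l0 : l != 0 by apply: contra_notN nz => /eqP ->; rewrite act0.
exists (act sigma l^-1); first exact: act_in; split=> x _.
  by rewrite -[_ (_ x)]/((_ \o _) x) act_comp mulVf // act1.
by rewrite -[_ (_ x)]/((_ \o _) x) act_comp mulfV // act1.
Qed.

Lemma act_fixed_point_free l m (x : Vex) :
  act sigma l x = act sigma m x -> l = m \/ x = 0.
Proof.
case: x => a b [ea eb]; case: (eqVneq l m) => [|lm]; [by left | right].
have slm : sigma l != sigma m by apply: contra lm => /eqP/sigma_inj ->.
by rewrite (eq_mulr_eq0 lm ea) (eq_mulr_eq0 slm eb).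
Qed.

Lemma qk_block1 W u : W u -> block1 u -> quasi_kernel F W u.
Proof.
move=> Wu u2; split=> // _ _ [l ->] [m ->]; exists (act sigma (l + m)); first exact: act_in.
by case: u {Wu} u2 => a b; rewrite /block1 /act VexD /= => ->; rewrite !mulr0 addr0 mulrDl.
Qed.

Lemma qk_block2 W u : W u -> block2 u -> quasi_kernel F W u.
Proof.
move=> Wu u1; split=> // _ _ [l ->] [m ->]; have [k ek] := sigma_surj (sigma l + sigma m).
exists (act sigma k); first exact: act_in.
by case: u {Wu} u1 => a b; rewrite /block2 /act VexD /= => ->; rewrite !mulr0 addr0 -mulrDl ek.
Qed.

Lemma qk_block W u : quasi_kernel F W u -> block1 u \/ block2 u.
Proof.
case=> _ /(_ _ _ (act_in 1) (act_in 1)) [_ [k ->]]; rewrite act1.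
case: u => a b /= [ea eb]; rewrite /block1 /block2 /=.
case: (eqVneq b 0) => [|b0]; [by left | right].
have /sigma_inj k1 : sigma k = sigma (-1).
  by apply: (mulIf b0); rewrite -eb sigmaN1 -mulr2n -mulr_natl F3t_natr2.
by move: ea; rewrite k1; lra.
Qed.

Lemma subgroup_block1 : subgroup_of block1.
Proof.
split=> //; split=> [x y|x]; rewrite /block1 ?VexD ?VexN /=; first by move=> -> ->; rewrite addr0.
by move=> ->; rewrite oppr0.
Qed.

Lemma subgroup_block2 : subgroup_of block2.
Proof.
split=> //; split=> [x y|x]; rewrite /block2 ?VexD ?VexN /=; first by move=> -> ->; rewrite addr0.
by move=> ->; rewrite oppr0.
Qed.

Lemma near_vector_space_Fex W :
  subgroup_of W -> (forall l x, W x -> W (act sigma l x)) ->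
  (forall x, W x -> W (x.1, 0) /\ W (0, x.2)) -> near_vector_space F W.
Proof.
move=> subW actW splitW; split=> //; split.
  by move=> _ [l ->]; split=> [x y|x /actW //]; exact: actD.
split; first exact: has_0_1_m1_Fex.
split; first exact: units_subgroup_Fex.
split=> [_ _ x [l ->] [m ->] _ /act_fixed_point_free[->|->]|x Wx]; [by left|by right|].
have [W1 W2] := splitW x Wx.
have -> : x = (x.1, 0) + (0, x.2) by case: x {Wx W1 W2} => a b; rewrite VexD /= addr0 add0r.
by apply: genD; apply: gen_in; [apply: qk_block1 | apply: qk_block2].
Qed.

Lemma near_vector_space_full : near_vector_space F (@setTV Vex).
Proof. by apply: near_vector_space_Fex. Qed.

Lemma near_vector_space_block1 : near_vector_space F block1.
Proof.
apply: near_vector_space_Fex; first exact: subgroup_block1.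
  by move=> l [a b]; rewrite /block1 /= => ->; rewrite mulr0.
by move=> [a b]; rewrite /block1 /= => ->.
Qed.

Lemma near_vector_space_block2 : near_vector_space F block2.
Proof.
apply: near_vector_space_Fex; first exact: subgroup_block2.
  by move=> l [a b]; rewrite /block2 /= => ->; rewrite mulr0.
by move=> [a b]; rewrite /block2 /= => ->.
Qed.

Lemma act_neq0 W k : ~ agree_on W (act sigma k) (@zero_map Vex) -> k != 0.
Proof. by apply: contra_notN => /eqP ->; rewrite act0. Qed.

Lemma regular_not_mixed W u v : regular F W ->
  quasi_kernel F W u -> quasi_kernel F W v -> u <> 0 -> v <> 0 ->
  block1 u -> block2 v -> False.
Proof.
move=> regW qu qv u0 v0 bu bv.
have [_ [k ->] [/act_neq0 k0 /qk_block]] := regW u v qu qv u0 v0.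
move: u v u0 v0 bu bv {qu qv} => [a b'] [a' b] u0 v0.
rewrite /block1 /block2 /= => b'0 a'0; subst b' a'.
have a0 : a != 0 by apply: contra_notN u0 => /eqP ->.
have b0 : b != 0 by apply: contra_notN v0 => /eqP ->.
rewrite mulr0 addr0 add0r => -[/eqP|/eqP].
  by rewrite mulf_eq0 sigma_eq0 (negPf k0) (negPf b0).
by rewrite (negPf a0).
Qed.

Lemma regular_sub_block W : near_vector_space F W -> regular F W ->
  (forall x, W x -> block1 x) \/ (forall x, W x -> block2 x).
Proof.
move=> nvsW regW.
have [[v [qv v0 bv]]|no2] := pselect (exists v, [/\ quasi_kernel F W v, v <> 0 & block2 v]).
  right; apply: (near_vector_space_sub nvsW subgroup_block2) => u qu u0.
  by case: (qk_block qu) => // bu; case: (regular_not_mixed regW qu qv u0 v0 bu bv).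
left; apply: (near_vector_space_sub nvsW subgroup_block1) => u qu u0.
by case: (qk_block qu) => // bu; case: no2; exists u.
Qed.

Lemma regular_in_block W : subgroup_of W -> (exists2 x, W x & x <> 0) ->
  (forall x, W x -> block1 x) \/ (forall x, W x -> block2 x) -> regular F W.
Proof.
move=> [_ [WD _]] [x Wx x0] WB u v [Wu _] [Wv _] _ _.
exists (act sigma 1); first exact: act_in.
rewrite act1; split; first by move/(_ x Wx).
have Wuv := WD u v Wu Wv.
by case: WB => WB; [apply: qk_block1 | apply: qk_block2] => //; apply: WB.
Qed.

Lemma regular_block1 : regular F block1.
Proof.
apply: regular_in_block; [exact: subgroup_block1 | | by left].
by exists (1, 0) => // /(congr1 fst) /eqP; rewrite oner_eq0.
Qed.

Lemma regular_block2 : regular F block2.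
Proof.
apply: regular_in_block; [exact: subgroup_block2 | | by right].
by exists (0, 1) => // /(congr1 snd) /eqP; rewrite oner_eq0.
Qed.

Lemma is_block_block1 : is_block F block1.
Proof.
split=> [|| W nvsW regW sW]; [exact: near_vector_space_block1 | exact: regular_block1 |].
case: (regular_sub_block nvsW regW) => // W2.
by move/W2/eqP: (sW (1, 0) erefl); rewrite oner_eq0.
Qed.

Lemma is_block_block2 : is_block F block2.
Proof.
split=> [|| W nvsW regW sW]; [exact: near_vector_space_block2 | exact: regular_block2 |].
case: (regular_sub_block nvsW regW) => // W1.
by move/W1/eqP: (sW (0, 1) erefl); rewrite oner_eq0.
Qed.

Lemma is_block_Fex W : is_block F W ->
  (forall v, W v <-> block1 v) \/ (forall v, W v <-> block2 v).
Proof.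
case=> nvsW regW maxW; case: (regular_sub_block nvsW regW) => WB; [left|right] => v.
  by split; [exact: WB | exact: maxW near_vector_space_block1 regular_block1 WB v].
by split; [exact: WB | exact: maxW near_vector_space_block2 regular_block2 WB v].
Qed.

Lemma field_char_block1 u : u <> 0 -> block1 u -> field_char F u 0.
Proof.
case: u => a b u0; rewrite /block1 /= => b0; subst b.
have a0 : a != 0 by apply: contra_notN u0 => /eqP ->.
split=> // n g n0 _ /nmul_one_eval gu gz; move: (gz (a, 0) I); rewrite gu pairMnE.
by move/(congr1 fst)/eqP; rewrite mulrn_eq0 (negPf a0) orbF; move: n0; lia.
Qed.

Lemma field_char_block2 u : u <> 0 -> block2 u -> field_char F u 3.
Proof.
case: u => a b u0; rewrite /block2 /= => a0; subst a.
have b0 : b != 0 by apply: contra_notN u0 => /eqP ->.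
have snd_eval n g : nmul_one F (0, b) n g -> (g (0, b)).2 = b * n%:R.
  by move/nmul_one_eval ->; rewrite pairMnE mulr_natr.
split=> [n g n0 n3 gn gz|_].
  move: (snd_eval n g gn); rewrite (gz (0, b) I) => /esym/eqP.
  by rewrite mulf_eq0 (negPf b0) natr_F3t_eq0; move: n0 n3; lia.
have [_ [k ->] kn] := nmul_one_exists 3 has_0_1_m1_Fex (@qk_block2 (@setTV Vex) (0, b) I erefl).
exists (act sigma k) => //; move/eqP: (snd_eval 3 _ kn).
have /eqP -> : (3%:R : F3t) == 0 by rewrite natr_F3t_eq0.
by rewrite mulr0 mulf_eq0 (negPf b0) orbF sigma_eq0 => /eqP ->; rewrite act0.
Qed.

Lemma Fex_near_vector_space_blocks :
  near_vector_space F (@setTV Vex)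
  /\ (forall f g, F f -> F g -> f \o g = g \o f)
  /\ is_block F block1
  /\ is_block F block2
  /\ (forall W, is_block F W ->
        (forall v, W v <-> block1 v) \/ (forall v, W v <-> block2 v))
  /\ (forall u, quasi_kernel F (@setTV Vex) u -> u <> 0 -> block1 u -> field_char F u 0)
  /\ (forall u, quasi_kernel F (@setTV Vex) u -> u <> 0 -> block2 u -> field_char F u 3).
Proof.
split; first exact: near_vector_space_full.
split; first by move=> _ _ [l ->] [m ->]; rewrite !act_comp mulrC.
split; first exact: is_block_block1.
split; first exact: is_block_block2.
split; first exact: is_block_Fex.
by split=> u _; [exact: field_char_block1 | exact: field_char_block2].
Qed.

End ExampleSpace.

Theorem mainTheorem19 :
  exists sigma : rat -> F3t,
    [/\ sigma 0 = 0,
        (forall x y, sigma (x * y) = sigma x * sigma y),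
        injective sigma,
        (forall x, x != 0 -> sigma x != 0)
      & (forall y, y != 0 -> exists x, x != 0 /\ sigma x = y)]
    /\ near_vector_space (Fex sigma) (@setTV Vex)
    /\ (forall f g, Fex sigma f -> Fex sigma g -> f \o g = g \o f)
    /\ is_block (Fex sigma) block1
    /\ is_block (Fex sigma) block2
    /\ (forall W, is_block (Fex sigma) W ->
          (forall v, W v <-> block1 v) \/ (forall v, W v <-> block2 v))
    /\ (forall u, quasi_kernel (Fex sigma) (@setTV Vex) u -> u <> 0 -> block1 u ->
          field_char (Fex sigma) u 0)
    /\ (forall u, quasi_kernel (Fex sigma) (@setTV Vex) u -> u <> 0 -> block2 u ->
          field_char (Fex sigma) u 3).
Proof.
have [Q [Q_irr Q_inj Q_surj]] := prime_monic_irreducible_bij 'F_3.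
have sigma0 := sigma_F3_0 Q.
have sigmaM := sigma_F3M Q_irr.
have sigma_inj := sigma_F3_inj Q_irr Q_inj.
have sigma_surj := sigma_F3_surj Q_irr Q_surj.
exists (sigma_F3 Q); split; last exact: Fex_near_vector_space_blocks.
split=> // [x|y y0]; first by rewrite sigma_F3_eq0.
have [x xy] := sigma_surj y; exists x; split=> //.
by apply: contraNneq y0 => x0; rewrite -xy x0.
Qed.
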